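(* Let $n$ be an even positive integer and let $\mathbb{F}$ be a field with $\operatorname{char}(\mathbb{F})\neq 2$ and $|\mathbb{F}|\geq n^2+1$. Let $Q_n$ denote the set of all $n\times n$ skew-symmetric matrices over $\mathbb{F}$. Let $\psi:Q_n\to Q_n$ be a map, and let $\chi$ be a map from the set of all invertible matrices in $Q_n$ into $Q_n$. If $\operatorname{tr}(xy)=\operatorname{tr}(\chi(x)\psi(y))$ for every invertible $x\in Q_n$ and every $y\in Q_n$, then $\psi$ is linear.
   Context: A matrix $x$ is skew-symmetric if $x^t=-x$. *)

From mathcomp Require Import all_boot all_order all_algebra.
Set Implicit Arguments. Unset Strict Implicit. Unset Printing Implicit Defensive.
Import GRing.Theory.
Local Open Scope ring_scope.

Definition skew_mx (F : fieldType) (n : nat) (x : 'M[F]_n) : Prop := x^T = - x.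

(* the field F has at least m elements (F may be infinite) *)
Definition card_ge (F : fieldType) (m : nat) : Prop :=
  exists s : seq F, uniq s /\ size s = m.

From mathcomp Require Import all_boot all_order all_algebra.
Set Implicit Arguments. Unset Strict Implicit. Unset Printing Implicit Defensive.
Import GRing.Theory.
Local Open Scope ring_scope.

(* Write <u, w> = tr (u w^T) for the dot product of vectorized matrices; for skew-symmetric
   w it equals -tr (u w), and it is nondegenerate on Q_n since 2 != 0 (test against
   E_pq - E_qp).  As n is even, Q_n contains an invertible J, and a J + y = J (a + J^-1 y)
   is invertible as soon as a avoids the at most n eigenvalues of -J^-1 y; hence the
   invertible x_1, ..., x_k in Q_n span Q_n.  For a basis (y_j) of Q_n the hypothesis
   factors the Gram matrix [<x_i, y_j>], whose rank is dim Q_n, as [<chi x_i, psi y_j>],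
   so the chi x_i span Q_n too.  Then psi (a x + y) - a psi x - psi y, being orthogonal
   to every chi x_i, vanishes. *)

Lemma card_geW (F : fieldType) (m k : nat) : (m <= k)%N -> card_ge F k -> card_ge F m.
Proof.
move=> le_mk [s [us sz]]; exists (take m s); split; first exact: take_uniq.
by rewrite size_takel // sz.
Qed.

Section ScalarShift.
Variables (F : fieldType) (n : nat).
Hypothesis hF : card_ge F n.+1.

Lemma exists_scalar_sub_unitmx (M : 'M[F]_n) : exists a, a%:M - M \in unitmx.
Proof.
have [s [us sz]] := hF.
have /allPn [a _ not_root] : ~~ all (root (char_poly M)) s.
  apply/negP => /(max_poly_roots (monic_neq0 (char_poly_monic M)))/(_ us).
  by rewrite size_char_poly sz ltnn.
exists a; apply: contraR not_root; rewrite -eigenvalue_root_char.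
rewrite unitmxE unitfE negbK => /det0P [v v_neq0 v_ker]; apply/eigenvalueP.
by exists v => //; move/eqP: v_ker; rewrite mulmxBr mul_mx_scalar subr_eq0 => /eqP <-.
Qed.

Lemma exists_scale_add_unitmx (J y : 'M[F]_n) :
  J \in unitmx -> exists a, a *: J + y \in unitmx.
Proof.
move=> uJ; have [a ua] := exists_scalar_sub_unitmx (- (invmx J *m y)).
exists a; suff <- : J *m (a%:M - - (invmx J *m y)) = a *: J + y.
  by rewrite unitmx_mul uJ.
by rewrite opprK mulmxDr mul_mx_scalar mulmxA mulmxV // mul1mx.
Qed.

End ScalarShift.

Section TraceForm.
Variables (F : fieldType) (m n : nat).

Lemma mxvec_dot (x y : 'M[F]_(m, n)) : (mxvec x *m (mxvec y)^T) 0 0 = \tr (x *m y^T).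
Proof.
rewrite mxE (reindex _ (curry_mxvec_bij _ _)) /= /mxtrace.
under [RHS]eq_bigr do rewrite mxE.
rewrite pair_bigA; apply: eq_bigr => -[i j] _.
by rewrite !mxE !mxvecE.
Qed.

Lemma mul_trmx_vecE k p (A : 'M[F]_(k, m * n)) (B : 'M[F]_(p, m * n)) i j :
  (A *m B^T) i j = \tr (vec_mx (row i A) *m (vec_mx (row j B))^T).
Proof.
rewrite -mxvec_dot !vec_mxK !mxE; by apply: eq_bigr => l _; rewrite !mxE.
Qed.

Lemma mxtrace_delta_mul_tr p q (z : 'M[F]_(m, n)) : \tr (delta_mx p q *m z^T) = z p q.
Proof. by rewrite -mxvec_dot mxvec_delta -rowE !mxE mxvecE. Qed.

End TraceForm.

Section NondegenerateRowSpace.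
Variables (F : fieldType) (r N : nat) (S : 'M[F]_(r, N)).
Hypothesis S_nondeg : forall v : 'rV[F]_N, (v <= S)%MS -> S *m v^T = 0 -> v = 0.

Lemma mxrank_mul_trmx : \rank (S *m S^T) = \rank S.
Proof.
rewrite -[RHS](mxrank_mul_ker S S^T).
suff /eqP -> : (S :&: kermx S^T)%MS == 0 by rewrite mxrank0 addn0.
apply/rowV0P => v; rewrite sub_capmx => /andP [vS /sub_kermxP vS0].
by apply: S_nondeg => //; rewrite -[S]trmxK -trmx_mul vS0 trmx0.
Qed.

Lemma sub_mul_trmx_factor k (A C : 'M[F]_(k, N)) (P : 'M[F]_(r, N)) :
  (S <= A)%MS -> (C <= S)%MS -> A *m S^T = C *m P^T -> (S <= C)%MS.
Proof.
move=> /submxP [D defS] CS AS_CP; rewrite -(geq_leqif (mxrank_leqif_sup CS)).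
apply: leq_trans (mxrankM_maxl C P^T).
by rewrite -AS_CP -mxrank_mul_trmx {1}defS -mulmxA mxrankM_maxr.
Qed.

Lemma nondeg_sub_eq0 k (C : 'M[F]_(k, N)) (v : 'rV[F]_N) :
  (S <= C)%MS -> (v <= S)%MS -> C *m v^T = 0 -> v = 0.
Proof.
move=> /submxP [D defS] vS Cv; apply: S_nondeg => //.
by rewrite defS -mulmxA Cv mulmx0.
Qed.

End NondegenerateRowSpace.

Section SkewSymmetric.
Variable F : fieldType.

Lemma skew_mxD n (x y : 'M[F]_n) : skew_mx x -> skew_mx y -> skew_mx (x + y).
Proof. by rewrite /skew_mx linearD /= => -> ->; rewrite opprD. Qed.

Lemma skew_mxB n (x y : 'M[F]_n) : skew_mx x -> skew_mx y -> skew_mx (x - y).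
Proof. by rewrite /skew_mx linearB /= => -> ->; rewrite opprD. Qed.

Lemma skew_mxZ n a (x : 'M[F]_n) : skew_mx x -> skew_mx (a *: x).
Proof. by rewrite /skew_mx linearZ /= => ->; rewrite scalerN. Qed.

Lemma mxtrace_mul_skew n (u w : 'M[F]_n) :
  skew_mx w -> \tr (u *m w^T) = - \tr (u *m w).
Proof. by move=> ->; rewrite mulmxN linearN. Qed.

Definition skew_space n : 'M[F]_(n * n) := kermx (lin_mx (@trmx F n n) + 1%:M).

Lemma skew_spaceP n (x : 'M[F]_n) :
  reflect (skew_mx x) (mxvec x <= skew_space n)%MS.
Proof.
rewrite sub_kermx mulmxDr mul_vec_lin mulmx1 -linearD /= /skew_mx.
apply: (iffP eqP) => [vec0 | ->]; last by rewrite addNr linear0.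
by apply/eqP; rewrite -addr_eq0 -(can_eq mxvecK) vec0 linear0.
Qed.

Lemma skew_mx_row_space n j : skew_mx (vec_mx (row j (skew_space n))).
Proof. by apply/skew_spaceP; rewrite vec_mxK row_sub. Qed.

Hypothesis two_neq0 : (2%:R : F) != 0.

Lemma skew_mx_tr_nondeg n (z : 'M[F]_n) :
  skew_mx z -> (forall u, skew_mx u -> \tr (u *m z^T) = 0) -> z = 0.
Proof.
move=> sz orth; apply/matrixP => p q; rewrite mxE.
have skew_pq : skew_mx (delta_mx p q - delta_mx q p : 'M[F]_n).
  by rewrite /skew_mx linearB /= !trmx_delta opprB.
have := orth _ skew_pq; rewrite mulmxBl linearB /= !mxtrace_delta_mul_tr.
have /matrixP/(_ p q) := sz; rewrite !mxE => ->; rewrite opprK -mulr2n -mulr_natr.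
by move/eqP; rewrite mulf_eq0 (negbTE two_neq0) orbF => /eqP.
Qed.

Lemma skew_space_nondeg n (v : 'rV[F]_(n * n)) :
  (v <= skew_space n)%MS -> skew_space n *m v^T = 0 -> v = 0.
Proof.
rewrite -[v]vec_mxK => /skew_spaceP sz Sv.
suff -> : vec_mx v = 0 by rewrite linear0.
apply: skew_mx_tr_nondeg => // u /skew_spaceP /submxP [w uw].
by rewrite -mxvec_dot uw -mulmxA Sv mulmx0 mxE.
Qed.

End SkewSymmetric.

Lemma unitmx_skew_even (F : fieldType) n :
  ~~ odd n -> exists J : 'M[F]_n, skew_mx J /\ J \in unitmx.
Proof.
move=> even_n; have -> : n = (n./2 + n./2)%N.
  by rewrite addnn -[LHS]odd_double_half (negbTE even_n).
move: n./2 => m; pose J : 'M[F]_(m + m) := block_mx 0 1%:M (- 1%:M) 0.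
have skewJ : skew_mx J.
  by rewrite /skew_mx tr_block_mx opp_block_mx linearN /= !trmx0 trmx1 opprK oppr0.
have /mulmx1_unit [uJ _] : J *m - J = 1%:M.
  rewrite /J opp_block_mx mulmx_block scalar_mx_block.
  by rewrite !(mul0mx, mulmx0, mul1mx, mulmx1, mulNmx, mulmxN, addr0, add0r, opprK, oppr0).
by exists J.
Qed.

Lemma unitmx_skew_span (F : fieldType) n : ~~ odd n -> card_ge F n.+1 ->
  exists k (X : 'I_k -> 'M[F]_n), (forall i, skew_mx (X i) /\ X i \in unitmx) /\
    (skew_space F n <= \matrix_i mxvec (X i))%MS.
Proof.
move=> even_n hF; have [J [sJ uJ]] := unitmx_skew_even F even_n.
pose y j := vec_mx (row j (skew_space F n)).
have /fin_all_exists [a uaJy] : forall j, exists a, a *: J + y j \in unitmx.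
  by move=> j; apply: exists_scale_add_unitmx.
pose X (i : 'I_(n * n + 1)) := if split i is inl j then a j *: J + y j else J.
exists (n * n + 1)%N, X; split.
  move=> i; rewrite /X; case: split => [j|_]; split=> //.
  by apply: skew_mxD; [apply: skew_mxZ | apply: skew_mx_row_space].
have X_lshift j : X (lshift 1 j) = a j *: J + y j.
  by rewrite /X (unsplitK (inl _ j : 'I_(n * n) + 'I_1)).
have X_rshift : X (rshift _ 0) = J.
  by rewrite /X (unsplitK (inr _ 0 : 'I_(n * n) + 'I_1)).
apply/row_subP => j; set XX := \matrix_i mxvec (X i).
have XX_row i : (mxvec (X i) <= XX)%MS by have := row_sub i XX; rewrite rowK.
have -> : row j (skew_space F n) =
    mxvec (X (lshift 1 j)) + (- a j) *: mxvec (X (rshift _ 0)).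
  by rewrite X_lshift X_rshift linearD linearZ /= scaleNr addrAC subrr add0r /y vec_mxK.
exact: addmx_sub (XX_row _) (scalemx_sub _ (XX_row _)).
Qed.

Theorem lemma2p5 (F : fieldType) (n : nat)
  (hn_pos : (0 < n)%N) (hn_even : ~~ odd n)
  (hchar : (2%:R : F) != 0)
  (hcard : card_ge F (n ^ 2 + 1)%N)
  (psi chi : 'M[F]_n -> 'M[F]_n)
  (hpsi : forall y : 'M[F]_n, skew_mx y -> skew_mx (psi y))
  (hchi : forall x : 'M[F]_n, skew_mx x -> x \in unitmx -> skew_mx (chi x))
  (htr : forall x y : 'M[F]_n, skew_mx x -> x \in unitmx -> skew_mx y ->
           \tr (x *m y) = \tr (chi x *m psi y)) :
  forall (a : F) (x y : 'M[F]_n), skew_mx x -> skew_mx y ->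
    psi (a *: x + y) = a *: psi x + psi y.
Proof.
move=> a x y sx sy; have sxy := skew_mxD (skew_mxZ a sx) sy.
have hF : card_ge F n.+1 by apply: card_geW hcard; rewrite addn1 ltnS -mulnn leq_pmulr.
have [k [X [XsU SX]]] := unitmx_skew_span hn_even hF.
set S := skew_space F n; pose C := \matrix_i mxvec (chi (X i)).
pose P := \matrix_j mxvec (psi (vec_mx (row j S))).
have SC : (S <= C)%MS.
  apply: (sub_mul_trmx_factor (@skew_space_nondeg F hchar n) SX _ (P := P)).
    by apply/row_subP => i; rewrite rowK; apply/skew_spaceP; apply: hchi; case: (XsU i).
  apply/matrixP => i j; rewrite !mul_trmx_vecE !rowK !mxvecK.
  have [sXi uXi] := XsU i.
  have sSj : skew_mx (vec_mx (row j S)) by apply: skew_mx_row_space.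
  by rewrite mxtrace_mul_skew // (mxtrace_mul_skew _ (hpsi _ sSj)) htr.
set D := psi (a *: x + y) - a *: psi x - psi y.
have sD : skew_mx D by apply: skew_mxB; [apply: skew_mxB; [|apply: skew_mxZ] |]; apply: hpsi.
have vecD0 : mxvec D = 0.
  apply: (nondeg_sub_eq0 (@skew_space_nondeg F hchar n) SC); first exact/skew_spaceP.
  apply/matrixP => i j; rewrite mul_trmx_vecE rowK (ord1 j) row_id !mxvecK mxE.
  have [sXi uXi] := XsU i.
  rewrite mxtrace_mul_skew // /D !mulmxBr -scalemxAr !linearB linearZ /=.
  rewrite -!(htr _ _ sXi uXi) // mulmxDr -scalemxAr linearD linearZ /=.
  by rewrite addrAC addrK subrr oppr0.
have : D = 0 by rewrite -[D]mxvecK vecD0 linear0.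
by move/eqP; rewrite /D -addrA -opprD subr_eq0 => /eqP.
Qed.
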